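(* Let $p$ be a prime and let $A$, $B$ be nontrivial finite $p$-groups. Let $p^d$ be the maximum order of an element of $A$. Then $$a(B)\le a(A\wr B)\le p^d a(B).$$
   Context: For a finite group $G$, the average order is $a(G)=\frac{1}{|G|}\sum_{g\in G}\mathrm{order}(g)$. For groups $A,B$, let $K=\prod_{b\in B}A$, on which $B$ acts by $x\cdot(\alpha_b)_b=(\alpha_{x^{-1}b})_b$ for $x\in B$; the wreath product $A\wr B$ is the semidirect product $K\rtimes B$ for this action. *)

From HB Require Import structures.
From mathcomp Require Import all_boot all_order all_algebra all_fingroup.
Set Implicit Arguments. Unset Strict Implicit. Unset Printing Implicit Defensive.
Import GRing.Theory.
Local Open Scope group_scope.

Definition avg_order (gT : finGroupType) (G : {set gT}) : rat :=
  ((\sum_(g in G) #[g])%:R / (#|G|)%:R)%R.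

(* The (regular, unrestricted) wreath product A wr B = K ⋊ B with
   K = prod_{b in B} A = {ffun B -> A}, B acting by
   (x . alpha)_b = alpha_(x^-1 b). *)
Section Wreath.
Variables aT bT : finGroupType.

Definition wreath : Type := ({ffun bT -> aT} * bT)%type.
HB.instance Definition _ := Finite.on wreath.

Definition wr_act (x : bT) (f : {ffun bT -> aT}) : {ffun bT -> aT} :=
  [ffun b => f (x^-1 * b)].

Definition wr_mul (u v : wreath) : wreath :=
  ([ffun b => u.1 b * wr_act u.2 v.1 b], u.2 * v.2).
Definition wr_one : wreath := ([ffun => 1], 1).
Definition wr_inv (u : wreath) : wreath :=
  (wr_act u.2^-1 [ffun b => (u.1 b)^-1], u.2^-1).

Lemma wr_mulA : associative wr_mul.
Proof.
move=> [a x] [b y] [c z]; rewrite /wr_mul /wr_act /=; congr (_, _).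
  by apply/ffunP=> d; rewrite !ffunE /= ?ffunE invMg !mulgA.
by rewrite mulgA.
Qed.

Lemma wr_mul1 : left_id wr_one wr_mul.
Proof.
move=> [a x]; rewrite /wr_mul /wr_act /=; congr (_, _).
  by apply/ffunP=> d; rewrite !ffunE invg1 !mul1g.
by rewrite mul1g.
Qed.

Lemma wr_mulV : left_inverse wr_one wr_inv wr_mul.
Proof.
move=> [a x]; rewrite /wr_mul /wr_act /wr_one /=; congr (_, _).
  by apply/ffunP=> d; rewrite !ffunE /= ?ffunE invgK mulVg.
by rewrite mulVg.
Qed.

HB.instance Definition _ := Finite_isGroup.Build wreath wr_mulA wr_mul1 wr_mulV.
End Wreath.

From mathcomp Require Import all_boot all_order all_algebra all_fingroup all_solvable.
Set Implicit Arguments. Unset Strict Implicit. Unset Printing Implicit Defensive.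
Import GRing.Theory Num.Theory.

(* The projection (f, x) |-> x of A wr B onto B is a morphism, so #[x] divides
   #[(f, x)]; and (f, x) ^+ #[x] lies in the base group K = A^B, whose exponent
   is exp(A), so #[(f, x)] divides #[x] * exp(A). Summing over the |K| elements
   (f, x) above each x and dividing by |A wr B| = |K| |B| gives
   a(B) <= a(A wr B) <= exp(A) a(B). For a p-group, which is nilpotent, exp(A)
   is the largest element order p^d. *)

Local Open Scope group_scope.

Lemma exponent_nil_bigmax (gT : finGroupType) (G : {group gT}) :
  nilpotent G -> exponent G = \max_(x in G) #[x].
Proof.
case/exponent_witness=> x Gx expG.
apply/eqP; rewrite eqn_leq {1}expG (bigmax_sup x) //=.
by apply/bigmax_leqP=> y Gy; rewrite dvdn_leq ?exponent_gt0 ?dvdn_exponent.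
Qed.

Lemma cardT_gt0 (gT : finGroupType) : 0 < #|gT|.
Proof. by apply/card_gt0P; exists 1. Qed.

Lemma avg_orderT (gT : finGroupType) :
  avg_order [set: gT] = ((\sum_(g : gT) #[g])%:R / #|gT|%:R)%R.
Proof.
by rewrite /avg_order cardsT; congr (_%:R / _)%R; apply: eq_bigl => g; rewrite inE.
Qed.

Section WreathOrder.

Variables aT bT : finGroupType.
Local Notation W := (wreath aT bT).
Local Notation K := {ffun bT -> aT}.

Lemma wreath_mulE (u v : W) :
  u * v = ([ffun b => u.1 b * v.1 (u.2^-1 * b)], u.2 * v.2).
Proof. by congr (_, _); apply/ffunP=> b; rewrite !ffunE. Qed.

Definition wreath_top (u : W) : bT := u.2.

Lemma wreath_top_morphM : {in [set: W] &, {morph wreath_top : u v / u * v}}.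
Proof. by []. Qed.

Canonical wreath_top_morphism := Morphism wreath_top_morphM.

Lemma order_wreath_top_dvd (u : W) : #[u.2] %| #[u].
Proof. exact: (morph_order wreath_top_morphism (in_setT u)). Qed.

Lemma expg_wreath_base (f : K) n : ((f, 1) : W) ^+ n = ([ffun b => f b ^+ n], 1).
Proof.
elim: n => [|n IHn]; first by congr (_, _); apply/ffunP=> b; rewrite !ffunE.
rewrite expgS IHn wreath_mulE /= invg1 mulg1; congr (_, _).
by apply/ffunP=> b; rewrite !ffunE mul1g expgS.
Qed.

Lemma order_wreath_base_dvd (f : K) : #[(f, 1) : W] %| exponent [set: aT].
Proof.
rewrite order_dvdn expg_wreath_base; apply/eqP; congr (_, _).
by apply/ffunP=> b; rewrite !ffunE expg_exponent ?inE.
Qed.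

Lemma order_wreath_dvd (u : W) : #[u] %| #[u.2] * exponent [set: aT].
Proof.
have top1 : (u ^+ #[u.2]).2 = 1.
  by rewrite -[_.2]/(wreath_top _) morphX ?inE // expg_order.
rewrite order_dvdn expgM; case: (u ^+ #[u.2]) top1 => f x /= ->.
by rewrite -order_dvdn order_wreath_base_dvd.
Qed.

Lemma sum_order_wreath :
  \sum_(u : W) #[u] = \sum_(f : K) \sum_(x : bT) #[(f, x) : W].
Proof. by rewrite pair_big; apply: eq_bigr => -[]. Qed.

Lemma sum_order_wreath_ge :
  #|K| * \sum_(x : bT) #[x] <= \sum_(u : W) #[u].
Proof.
rewrite sum_order_wreath -sum_nat_const; apply: leq_sum => f _.
apply: leq_sum => x _; exact: dvdn_leq (order_gt0 _) (order_wreath_top_dvd (f, x)).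
Qed.

Lemma sum_order_wreath_le :
  \sum_(u : W) #[u] <= exponent [set: aT] * (#|K| * \sum_(x : bT) #[x]).
Proof.
rewrite sum_order_wreath -sum_nat_const !big_distrr; apply: leq_sum => f _.
apply: leq_sum => x _ /=; rewrite mulnC.
by apply: dvdn_leq (order_wreath_dvd (f, x)); rewrite muln_gt0 order_gt0 exponent_gt0.
Qed.

Lemma avg_order_wreathE :
  avg_order [set: W] = ((\sum_(u : W) #[u])%:R / #|K|%:R / #|bT|%:R)%R.
Proof. by rewrite avg_orderT card_prod natrM invfM mulrA. Qed.

Lemma card_wreath_base_gt0 : 0 < #|K|.
Proof. by rewrite card_ffun expn_gt0 cardT_gt0. Qed.

Lemma avg_order_wreath_ge : (avg_order [set: bT] <= avg_order [set: W])%R.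
Proof.
rewrite avg_order_wreathE avg_orderT ler_pM2r ?invr_gt0 ?ltr0n ?cardT_gt0 //.
rewrite ler_pdivlMr ?ltr0n ?card_wreath_base_gt0 // -natrM ler_nat.
by rewrite mulnC sum_order_wreath_ge.
Qed.

Lemma avg_order_wreath_le :
  (avg_order [set: W] <= (exponent [set: aT])%:R * avg_order [set: bT])%R.
Proof.
rewrite avg_order_wreathE avg_orderT mulrA ler_pM2r ?invr_gt0 ?ltr0n ?cardT_gt0 //.
rewrite ler_pdivrMr ?ltr0n ?card_wreath_base_gt0 // -!natrM ler_nat.
by rewrite -mulnA [(_ * #|_|)%N]mulnC sum_order_wreath_le.
Qed.

End WreathOrder.

Local Close Scope group_scope.

Theorem theorem3 (p : nat) (aT bT : finGroupType) (d : nat) :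
  prime p ->
  (p.-group [set: aT])%g -> (p.-group [set: bT])%g ->
  [set: aT] != 1%g -> [set: bT] != 1%g ->
  \max_(x : aT) #[x]%g = p ^ d ->
  (avg_order [set: bT] <= avg_order [set: wreath aT bT])%R /\
  (avg_order [set: wreath aT bT] <= (p ^ d)%:R * avg_order [set: bT])%R.
Proof.
move=> _ pA _ _ _ max_order.
have expA : exponent [set: aT] = p ^ d.
  rewrite (exponent_nil_bigmax (pgroup_nil pA)) -max_order.
  by apply: eq_bigl => x; rewrite inE.
by split; [exact: avg_order_wreath_ge | rewrite -expA; exact: avg_order_wreath_le].
Qed.
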